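(* Consider the Distributed Guided Local Search (DGLS) algorithm described in the context, with any manner, evaporation rate and update scope. Fix any round and the cost modifiers $M_{ij}$ current at that round. Consider the game in which each agent $i$ chooses $d_i\in D_i$ and incurs cost $c_i(\tau)=\sum_{j\in\mathcal{N}_i}\mathrm{EffCost}(d_i,j,d_j)$, where $\tau=(d_1,\dots,d_n)$. Then this game is a potential game with potential function $\Phi(\tau)=\frac12\sum_{i}\sum_{j\in\mathcal{N}_i}\mathrm{EffCost}(d_i,j,d_j)$: for every agent $i$, every $\tau$ and every $d_i'\in D_i$, the change in $c_i$ caused by $i$ unilaterally switching from $d_i$ to $d_i'$ equals the corresponding change in $\Phi$.
   Context: A (binary) Distributed Constraint Optimization Problem (DCOP) consists of agents $1,\dots,n$, each controlling one variable $x_i$ with finite domain $D_i$, and binary constraint functions $f_{ij}:D_i\times D_j\to\mathbb{R}_{\ge0}$ with $f_{ji}=f_{ij}^T$; $\mathcal{N}_i$ is the set of neighbors of $i$. Write $\check f_{ij}=\min f_{ij}$, $\hat f_{ij}=\max f_{ij}$. Tables held by agent $i$ are indexed with $i$'s own value first and the neighbor's value second. DGLS is parameterized by a manner (additive or multiplicative), an evaporation rate $\gamma$, and a scope ($cel$, $tab$, $row$, $col$). Each agent $i$ keeps, for each $j\in\mathcal{N}_i$, a cost modifier $M_{ij}$ (a $|D_i|\times|D_j|$ real matrix), initialized to $0$. The effective cost is $\mathrm{EffCost}(d_i,j,d_j)=f_{ij}(d_i,d_j)+M_{ij}(d_i,d_j)$ (additive) or $f_{ij}(d_i,d_j)\cdot[1+M_{ij}(d_i,d_j)]$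 (multiplicative), where $M_{ij}$ is the modifier held by agent $i$. Initially each agent picks a random value $d_i\in D_i$ and sends it to its neighbors. Rounds are synchronous; in each round agent $i$: (1) sets $\bar P_i=\emptyset$ and receives the neighbors' current values $d_j$; (2) computes $d_i^*\in\arg\min_{d\in D_i}\sum_{j\in\mathcal{N}_i}\mathrm{EffCost}(d,j,d_j)$ and gain $\Delta_i=\sum_{j}[\mathrm{EffCost}(d_i,j,d_j)-\mathrm{EffCost}(d_i^*,j,d_j)]$, and exchanges gains with neighbors; (3) if $\Delta_i>0$ and $\Delta_i$ is the best improvement among itself and its neighbors, it sets $d_i\gets d_i^*$; otherwise, if no neighbor can improve (all neighbors' gains are $\le 0$), then for each $j\in\mathcal{N}_i$ it declares $f_{ij}$ violated with probability $\eta=\frac{f_{ij}(d_i,d_j)-\check f_{ij}}{\hat f_{ij}-\check f_{ij}}$, and for each violated one adds $j$ to $\bar P_i$ and sends a SYNC message to $j$; (4) lets $\tilde P_i$ be the set of neighbors from which it received SYNC this round; (5) for each $j\in\mathcal{N}_i$: first evaporates, $M_{ij}\gets\gamma M_{ij}$ entrywise, then updates with current values $d_i,d_j$: scope $cel$: if $j\in\bar P_i\cup\tilde P_i$, $M_{ij}(d_i,d_j)\mathrel{+}=1$; scope $tab$: if $j\in\bar P_i\cup\tilde P_i$, all entries of $M_{ij}$ are increased by 1; scope $row$: if $j\in\bar P_i$, $M_{ij}(d_i,d_j')\mathrel{+}=1$ for all $d_j'$; if $j\in\tilde P_i$, $M_{ij}(d_i',d_j)\mathrel{+}=1$ for all $d_i'$;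 if $j\in\bar P_i\cap\tilde P_i$, $M_{ij}(d_i,d_j)\mathrel{-}=1$; scope $col$: same as $row$ with the roles exchanged (if $j\in\bar P_i$ increment column $d_j$, if $j\in\tilde P_i$ increment row $d_i$, and subtract 1 at $(d_i,d_j)$ if both); (6) sends its value $d_i$ to its neighbors. *)

From HB Require Import structures.
From mathcomp Require Import all_boot all_order all_algebra.
Set Implicit Arguments. Unset Strict Implicit. Unset Printing Implicit Defensive.
Import Order.TTheory GRing.Theory Num.Theory.
Local Open Scope ring_scope.

Inductive manner := Additive | Multiplicative.
Inductive scope := Cel | Tab | Row | Col.

Definition ind {R : numDomainType} (b : bool) : R := if b then 1 else 0.

Section DGLS.
Variable R : realFieldType.
Variable n : nat.
Variable D : 'I_n -> finType.
(* neighborhood relation: j \in N_i iff adj i j *)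
Variable adj : rel 'I_n.
(* constraint tables, indexed with i's own value first *)
Variable f : forall i j : 'I_n, D i -> D j -> R.
Variable mn : manner.
Variable gam : R.
Variable sc : scope.

Definition assignment := forall i : 'I_n, D i.
(* M i j is the modifier M_ij held by agent i for neighbor j *)
Definition modifiers := forall i j : 'I_n, D i -> D j -> R.

Definition EffCost (M : modifiers) (i : 'I_n) (x : D i) (j : 'I_n) (y : D j) : R :=
  match mn with
  | Additive => f x y + M i j x y
  | Multiplicative => f x y * (1 + M i j x y)
  end.

Definition local_cost (M : modifiers) (tau : assignment) (i : 'I_n) (x : D i) : R :=
  \sum_(j | adj i j) EffCost M x (tau j).

Definition agent_cost (M : modifiers) (tau : assignment) (i : 'I_n) : R :=
  local_cost M tau (tau i).

Definition potential (M : modifiers) (tau : assignment) : R :=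
  2^-1 * \sum_(i : 'I_n) \sum_(j | adj i j) EffCost M (tau i) (tau j).

(* min / max of the table f_ij (the current value pair is used as seed) *)
Definition fmin (i j : 'I_n) (x : D i) (y : D j) : R :=
  \big[Num.min/f x y]_(p : (D i * D j)%type) f p.1 p.2.
Definition fmax (i j : 'I_n) (x : D i) (y : D j) : R :=
  \big[Num.max/f x y]_(p : (D i * D j)%type) f p.1 p.2.

(* violation probability eta (= 0 when the table is constant, since x/0 = 0) *)
Definition eta (i j : 'I_n) (x : D i) (y : D j) : R :=
  (f x y - fmin x y) / (fmax x y - fmin x y).

(* step (5): evaporation then scope-dependent update of M_ij with current
   values x = d_i, y = d_j; pb = (j \in Pbar_i), pt = (j \in Ptilde_i). *)
Definition update_mod (i j : 'I_n) (Mij : D i -> D j -> R) (x : D i) (y : D j)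
    (pb pt : bool) : D i -> D j -> R :=
  fun a b => gam * Mij a b +
    match sc with
    | Cel => ind ((pb || pt) && (a == x) && (b == y))
    | Tab => ind (pb || pt)
    | Row => ind (pb && (a == x)) + ind (pt && (b == y))
             - ind (pb && pt && (a == x) && (b == y))
    | Col => ind (pb && (b == y)) + ind (pt && (a == x))
             - ind (pb && pt && (a == x) && (b == y))
    end.

(* Nondeterminism: the choice of argmin dstar, the tie-breaking among equal
   best gains (mv), and the random violation declarations (Pbar), where a
   violation can be declared iff eta > 0 and can be not declared iff eta < 1.
   Pbar i j = true iff agent i sends SYNC to j; hence Ptilde_i = {j | Pbar j i}. *)
Definition dgls_step (s s' : assignment * modifiers) : Prop :=
  let d := s.1 in let M := s.2 in let d' := s'.1 in let M' := s'.2 in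
  exists (dstar : assignment) (mv : pred 'I_n) (Pbar : rel 'I_n),
    let gain i := local_cost M d (d i) - local_cost M d (dstar i) in
    (forall i (y : D i), local_cost M d (dstar i) <= local_cost M d y) /\
    (forall i, mv i -> 0 < gain i /\ (forall j, adj i j -> gain j <= gain i)) /\
    (forall i, 0 < gain i -> (forall j, adj i j -> gain j < gain i) -> mv i) /\
        (forall i j, Pbar i j ->
           [/\ ~~ mv i, adj i j, (forall k, adj i k -> gain k <= 0)
             & 0 < eta (d i) (d j)]) /\
        (forall i j, ~~ mv i -> adj i j -> (forall k, adj i k -> gain k <= 0) ->
           ~~ Pbar i j -> eta (d i) (d j) < 1) /\
    (forall i, d' i = if mv i then dstar i else d i) /\
    (forall i j, M' i j =
           if adj i j then update_mod (M i j) (d' i) (d' j) (Pbar i j) (Pbar j i)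
           else M i j).

Inductive reachable : assignment * modifiers -> Prop :=
  | reach_init (d : assignment) : reachable (d, fun i j _ _ => 0)
  | reach_step s s' : reachable s -> dgls_step s s' -> reachable s'.

End DGLS.

From HB Require Import structures.
From mathcomp Require Import all_boot all_order all_algebra.
Import Order.TTheory GRing.Theory Num.Theory.
Local Open Scope ring_scope.

(* Every DGLS update treats the two endpoints of an edge alike: swapping i and j
   exchanges Pbar and Ptilde and transposes the updated table.  Since the
   modifiers start at 0, M_ji is the transpose of M_ij in every reachable state,
   so the effective cost of an edge is the same seen from either endpoint.  The
   game is then a pairwise symmetric interaction game: when agent i deviates,
   only the terms of Phi on edges at i change, each edge occurs twice in the
   double sum, once in i's own cost and once in the neighbour's, and the factor
   1/2 compensates. *)

Section PairwiseInteractionGame.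
Set Implicit Arguments.
Unset Strict Implicit.

Variables (R : numFieldType) (n : nat) (D : 'I_n -> Type) (adj : rel 'I_n).
Hypotheses (adj_irr : irreflexive adj) (adj_sym : symmetric adj).
Variable w : forall k j : 'I_n, D k -> D j -> R.
Hypothesis w_sym : forall k j (a : D k) (b : D j), adj k j -> w a b = w b a.

Definition interaction_cost (tau : forall k, D k) (k : 'I_n) : R :=
  \sum_(j | adj k j) w (tau k) (tau j).

Variables (tau : forall k, D k) (i : 'I_n) (x : D i).

Lemma interaction_cost_dfwith :
  interaction_cost (dfwith tau x) i - interaction_cost tau i =
  \sum_(k | adj i k) (w x (tau k) - w (tau i) (tau k)).
Proof.
rewrite -sumrB dfwith_in; apply: eq_bigr => k aik.
have ik : i != k by apply: contraTneq aik => <-; rewrite adj_irr.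
by rewrite dfwith_out.
Qed.

Lemma interaction_cost_dfwith_neq k : k != i ->
  interaction_cost (dfwith tau x) k - interaction_cost tau k =
  if adj k i then w (tau k) x - w (tau k) (tau i) else 0.
Proof.
move=> ki; rewrite -sumrB dfwith_out 1?eq_sym //.
have unchanged j : j != i -> w (tau k) (dfwith tau x j) - w (tau k) (tau j) = 0.
  by move=> ji; rewrite dfwith_out 1?eq_sym // subrr.
case: ifP => aki.
  by rewrite (bigD1 i) //= dfwith_in big1 ?addr0 // => j /andP[_ /unchanged].
by apply: big1 => j akj; apply: unchanged; apply: contraFneq aki => <-.
Qed.

Lemma sum_interaction_cost_dfwith :
  \sum_k interaction_cost (dfwith tau x) k - \sum_k interaction_cost tau k =
  (interaction_cost (dfwith tau x) i - interaction_cost tau i) *+ 2.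
Proof.
rewrite -sumrB (bigD1 i) //= mulr2n; congr (_ + _).
rewrite interaction_cost_dfwith (eq_bigr _ interaction_cost_dfwith_neq).
rewrite -big_mkcondr /=; apply: eq_big => [k | k /andP[_ aki]].
  rewrite adj_sym andb_idl // => aik.
  by apply: contraTneq aik => ->; rewrite adj_irr.
by rewrite ![w (tau k) _]w_sym.
Qed.

Lemma half_sum_interaction_cost_dfwith :
  2^-1 * \sum_k interaction_cost (dfwith tau x) k -
    2^-1 * \sum_k interaction_cost tau k =
  interaction_cost (dfwith tau x) i - interaction_cost tau i.
Proof.
rewrite -mulrBr sum_interaction_cost_dfwith -[(_ - _) *+ 2]mulr_natl.
by rewrite mulrA mulVf ?mul1r ?pnatr_eq0.
Qed.

End PairwiseInteractionGame.

Section ReachableModifiers.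
Set Implicit Arguments.
Unset Strict Implicit.

Variables (R : realFieldType) (n : nat) (D : 'I_n -> finType).
Variables (adj : rel 'I_n) (f : forall i j : 'I_n, D i -> D j -> R).
Variables (mn : manner) (gam : R) (sc : scope).
Hypothesis adj_sym : symmetric adj.

Lemma update_mod_swap i j (Mij : D i -> D j -> R) (Mji : D j -> D i -> R)
    (x : D i) (y : D j) (pb pt : bool) a b :
  Mij a b = Mji b a ->
  update_mod gam sc Mij x y pb pt a b = update_mod gam sc Mji y x pt pb b a.
Proof.
rewrite /update_mod => ->; congr (_ + _).
by case: sc pb pt (a == x) (b == y) => [] [] [] [] [];
  rewrite /ind /= ?addr0 ?add0r ?subrr ?subr0 // addrC.
Qed.

Lemma reachable_modifiers_sym s : reachable adj f mn gam sc s ->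
  forall i j (a : D i) (b : D j), adj i j -> s.2 i j a b = s.2 j i b a.
Proof.
elim=> [// | s0 s' _ IH [dstar [mv [Pbar [_ [_ [_ [_ [_ [_ HM]]]]]]]]]].
move=> i j a b aij /=; rewrite !HM aij -adj_sym aij.
exact/update_mod_swap/IH.
Qed.

Hypothesis f_sym :
  forall i j (x : D i) (y : D j), adj i j -> f y x = f x y.

Lemma reachable_EffCost_sym (d : assignment D) (M : modifiers R D) :
  reachable adj f mn gam sc (d, M) ->
  forall i j (a : D i) (b : D j), adj i j ->
    EffCost f mn M a b = EffCost f mn M b a.
Proof.
move/reachable_modifiers_sym => /= M_sym i j a b aij.
by rewrite /EffCost -f_sym // M_sym.
Qed.

End ReachableModifiers.

Theorem theorem2 (R : realFieldType) (n : nat) (D : 'I_n -> finType)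
    (adj : rel 'I_n) (f : forall i j : 'I_n, D i -> D j -> R)
    (adj_irr : forall i, ~~ adj i i)
    (adj_sym : forall i j, adj i j = adj j i)
    (f_sym : forall i j (x : D i) (y : D j), adj i j -> f j i y x = f i j x y)
    (f_ge0 : forall i j (x : D i) (y : D j), 0 <= f i j x y)
    (mn : manner) (gam : R) (sc : scope)
    (d : assignment D) (M : modifiers R D) :
  reachable adj f mn gam sc (d, M) ->
  forall (i : 'I_n) (tau : assignment D) (x : D i),
    agent_cost adj f mn M (dfwith tau x) i - agent_cost adj f mn M tau i =
    potential adj f mn M (dfwith tau x) - potential adj f mn M tau.
Proof.
move=> reach i tau x.
have adj_irrefl : irreflexive adj by move=> k; apply: negbTE.
have EffCost_sym := reachable_EffCost_sym adj_sym f_sym reach.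
symmetry; exact: (half_sum_interaction_cost_dfwith adj_irrefl adj_sym
  (w := fun k j (a : D k) (b : D j) => EffCost f mn M a b) EffCost_sym).
Qed.
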